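(* Let $k\ge2$, $n\ge1$, $A=\{0<1<\cdots<k-1\}$, and let $M$ be a de Bruijn set of span $n$ over $A$. Then $M$ contains a necklace of length at least $n$.
   Context: A word is primitive if not a proper power of another word; a necklace is the set of conjugates ($xy\sim yx$) of a primitive word, and its length is the length of its words. A multiset $M=\{n_{1},\dots,n_{t}\}$ of necklaces is a de Bruijn set of span $n$ over $A$ if $|n_{1}|+\cdots+|n_{t}|=k^{n}$ and every word of $A^{n}$ is a prefix of some power of some word belonging to one of the $n_{i}$. *)

(* Words over A = 'I_k are sequences; the alphabet order
   0<1<...<k-1 is the natural order of 'I_k (not needed for the statement). *)
From mathcomp Require Import all_boot.
Set Implicit Arguments. Unset Strict Implicit. Unset Printing Implicit Defensive.

Section Words.
Variable T : eqType.

Definition wpow (u : seq T) (m : nat) : seq T := flatten (nseq m u).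

Definition primitive (w : seq T) : Prop :=
  w <> [::] /\ forall (u : seq T) (m : nat), 2 <= m -> w <> wpow u m.

Definition conjugate (u v : seq T) : Prop :=
  exists x y : seq T, u = x ++ y /\ v = y ++ x.

(* A necklace is represented by a primitive word u; the words belonging to it
   are the conjugates of u, and its length is size u. *)
Definition in_necklace (u v : seq T) : Prop := conjugate u v.
End Words.

(* M : a multiset (list, with repetitions) of necklaces, each given by a
   primitive representative word. *)
Definition de_bruijn_set (k n : nat) (M : seq (seq 'I_k)) : Prop :=
  [/\ forall u, u \in M -> primitive u,
      sumn (map size M) = k ^ n &
      forall w : seq 'I_k, size w = n ->
        exists2 u, u \in M &
          exists v, in_necklace u v /\ exists m, prefix w (wpow v m)].

(** The word [0^(n-1) 1] has size [n], so it is a prefix of a power of some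
    word [v] conjugate to a representative [u] of a necklace of [M].  A prefix
    of a power of [v] is periodic with period [size v]; if [size v < n], the
    final letter [1] would be repeated [size v] positions earlier, inside the
    block of [0]s.  Hence [n <= size v = size u]. *)
From mathcomp Require Import all_boot.

Set Implicit Arguments.
Unset Strict Implicit.
Unset Printing Implicit Defensive.

Section WordPowers.
Variable T : eqType.
Implicit Types (v w : seq T) (m : nat).

Lemma size_wpow v m : size (wpow v m) = size v * m.
Proof. by rewrite size_flatten /shape map_nseq sumn_nseq. Qed.

Lemma wpowS v m : wpow v m.+1 = v ++ wpow v m.
Proof. by []. Qed.

Lemma wpowSr v m : wpow v m.+1 = wpow v m ++ v.
Proof.
by rewrite /wpow -flatten_rcons; congr flatten; elim: m => //= m ->.
Qed.

Lemma conjugate_size u v : conjugate u v -> size u = size v.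
Proof. by case=> x [y [-> ->]]; rewrite !size_cat addnC. Qed.

Lemma nth_wpowD (x0 : T) v m i :
  i + size v < size (wpow v m) ->
  nth x0 (wpow v m) (i + size v) = nth x0 (wpow v m) i.
Proof.
case: m => [|m]; first by rewrite size_wpow muln0.
rewrite size_wpow mulnSr ltn_add2r => lt_i.
rewrite {1}wpowS nth_cat ltnNge leq_addl /= addnK wpowSr nth_cat.
by rewrite size_wpow lt_i.
Qed.

Lemma prefix_wpow_period (x0 : T) w v m i :
  prefix w (wpow v m) -> i + size v < size w ->
  nth x0 w (i + size v) = nth x0 w i.
Proof.
move=> pre_w lt_i; have le_w := size_prefix pre_w.
move: pre_w; rewrite prefixE => /eqP <-.
rewrite !nth_take ?(leq_ltn_trans (leq_addr _ _) lt_i) //.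
exact/nth_wpowD/(leq_trans lt_i).
Qed.

Lemma rcons_nseq_prefix_wpow (a b : T) n v m :
  a != b -> prefix (rcons (nseq n a) b) (wpow v m) -> n < size v.
Proof.
move=> neq_ab pre_w; rewrite ltnNge; apply/negP => le_vn.
have v_gt0 : 0 < size v.
  have := size_prefix pre_w; rewrite size_wpow lt0n.
  by apply: contraTneq => ->; rewrite size_rcons.
have shift_lt : n - size v < n by rewrite ltn_subrL v_gt0 (leq_trans v_gt0 le_vn).
have := prefix_wpow_period a (i := n - size v) pre_w.
rewrite subnK // size_rcons size_nseq ltnSn => /(_ isT).
rewrite !nth_rcons size_nseq ltnn eqxx shift_lt nth_nseq shift_lt => /eqP.
by rewrite eq_sym (negbTE neq_ab).
Qed.

End WordPowers.

Theorem lemma3p3 (k n : nat) (M : seq (seq 'I_k)) :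
  2 <= k -> 1 <= n -> de_bruijn_set n M ->
  exists2 u, u \in M & n <= size u.
Proof.
move=> k_gt1; case: n => // n _ [_ _ covers].
pose a : 'I_k := Ordinal (ltnW k_gt1); pose b : 'I_k := Ordinal k_gt1.
have size_w : size (rcons (nseq n a) b) = n.+1 by rewrite size_rcons size_nseq.
have [u u_in [v [conj_uv [m pre_w]]]] := covers _ size_w.
exists u => //; rewrite (conjugate_size conj_uv).
exact: rcons_nseq_prefix_wpow pre_w.
Qed.
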